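(* Consider a Boolean control network $\mathbf{x}(t+1)=L\ltimes\mathbf{u}(t)\ltimes\mathbf{x}(t)$, $\mathbf{y}(t)=H\mathbf{x}(t)$, with $L\in\mathcal{L}_{N\times NM}$, $H\in\mathcal{L}_{P\times N}$, and a finite-length reference output trajectory $\mathbf{y}_r(t)=\delta_P^{i_t}$, $t\in[1,T]$. Assume this trajectory is trackable from every initial state in $\mathcal{L}_N$. Define $\mathbf{v}(t)=H^\top\delta_P^{i_t}$, $L_{tot}=L_1\vee\cdots\vee L_M$, $\boldsymbol{\alpha}(1)=\mathbf{v}(1)$, $\boldsymbol{\alpha}(t)=\mathbf{v}(t)\odot(L_{tot}\boldsymbol{\alpha}(t-1))$ for $t\in[2,T]$, and $\boldsymbol{\beta}(T)=\boldsymbol{\alpha}(T)$, $\boldsymbol{\beta}(t)=\boldsymbol{\alpha}(t)\odot(L_{tot}^\top\boldsymbol{\beta}(t+1))$ for $t=T-1,\dots,1$. Define $$\mathcal{T}_{xu}(0)=\{(\delta_N^j,\delta_M^i):(L\ltimes\delta_M^i\ltimes\delta_N^j)\odot\boldsymbol{\beta}(1)\neq\mathbf{0}_N\},$$ $$\mathcal{T}_{xu}(t)=\{(\delta_N^j,\delta_M^i):[\boldsymbol{\beta}(t)]_j\neq0\text{ and }(L\ltimes\delta_M^i\ltimes\delta_N^j)\odot\boldsymbol{\beta}(t+1)\neq\mathbf{0}_N\},\quad t\in[1,T-1],$$ and $\mathcal{T}_u(t,\mathbf{x})=\{\mathbf{u}\in\mathcal{L}_M:(\mathbf{x},\mathbf{u})\in\mathcal{T}_{xu}(t)\}$.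 Then for every initial state $\mathbf{x}_0\in\mathcal{L}_N$, an input sequence $\{\mathbf{u}(t)\}_{t=0}^{T-1}$ ensuring output tracking (i.e. $H\mathbf{x}_t=\mathbf{y}_r(t)$ for all $t\in[1,T]$) is obtained by the recursive procedure: for $t=0,1,\dots,T-1$, choose $\mathbf{u}_t\in\mathcal{T}_u(t,\mathbf{x}_t)$ and set $\mathbf{x}_{t+1}=L\ltimes\mathbf{u}_t\ltimes\mathbf{x}_t$, with $\mathbf{u}(t)=\mathbf{u}_t$.
   Context: $\delta_k^i$ is the $i$-th canonical vector of $\mathbb{R}^k$; $\mathcal{L}_k$ is the set of canonical vectors of $\mathbb{R}^k$; $\mathcal{L}_{k\times q}$ the set of $k\times q$ matrices whose columns lie in $\mathcal{L}_k$. $N=2^n$, $M=2^m$, $P=2^p$. $L=[L_1|\cdots|L_M]$ with $L_i\in\mathcal{L}_{N\times N}$, and $L\ltimes\delta_M^i\ltimes\mathbf{x}=L_i\mathbf{x}$. $\vee$ is entrywise Boolean OR, $\odot$ is the entrywise (Hadamard) product, matrix–vector products are ordinary (only the zero/nonzero pattern of the vectors matters), $[\mathbf{w}]_j$ is the $j$-th entry, $\mathbf{0}_N$ the zero vector. A trajectory is trackable from $\mathbf{x}_0$ if there exist inputs $\mathbf{u}(0),\dots,\mathbf{u}(T-1)\in\mathcal{L}_M$ such that the resulting states $\mathbf{x}(t+1)=L\ltimes\mathbf{u}(t)\ltimes\mathbf{x}(t)$, $\mathbf{x}(0)=\mathbf{x}_0$, satisfy $H\mathbf{x}(t)=\mathbf{y}_r(t)$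 for all $t\in[1,T]$. *)

(* Encoding:
   - a canonical vector delta_k^j of R^k is represented by its index j : 'I_k;
   - a logical matrix in L_{k x q} is represented by the function sending the
     column index to the row index of the 1 in that column;
   - L = [L_1 | ... | L_M] in L_{N x NM} is  L : 'I_M -> 'I_N -> 'I_N  with
     L i j = index of  L |x delta_M^i |x delta_N^j  (= L_i delta_N^j);
   - H in L_{P x N} is  H : 'I_N -> 'I_P;
   - Boolean (0/1 pattern) vectors of R^N are functions 'I_N -> bool. *)
From mathcomp Require Import all_boot.
Set Implicit Arguments. Unset Strict Implicit. Unset Printing Implicit Defensive.

Section BCN.
Variables (N M P : nat) (L : 'I_M -> 'I_N -> 'I_N) (H : 'I_N -> 'I_P).

Fixpoint traj (u : nat -> 'I_M) (x0 : 'I_N) (t : nat) : 'I_N :=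
  match t with 0 => x0 | t'.+1 => L (u t') (traj u x0 t') end.

Definition trackable_from (T : nat) (i : nat -> 'I_P) (x0 : 'I_N) : Prop :=
  exists u : nat -> 'I_M, forall t, 1 <= t <= T -> H (traj u x0 t) = i t.

(* v(t) = H^T delta_P^{i_t} :  [v(t)]_j <> 0  iff  H delta_N^j = delta_P^{i_t} *)
Definition vvec (i : nat -> 'I_P) (t : nat) : 'I_N -> bool :=
  fun j => H j == i t.

Definition Ltot_entry (k j : 'I_N) : bool := [exists a : 'I_M, L a j == k].

(* zero/nonzero pattern of L_tot w and of L_tot^T w *)
Definition Ltot_mul (w : 'I_N -> bool) : 'I_N -> bool :=
  fun k => [exists j, Ltot_entry k j && w j].
Definition LtotT_mul (w : 'I_N -> bool) : 'I_N -> bool :=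
  fun j => [exists k, Ltot_entry k j && w k].

(* alpha(1) = v(1), alpha(t) = v(t) .* (L_tot alpha(t-1)); alpha 0 is a dummy *)
Fixpoint alpha (i : nat -> 'I_P) (t : nat) : 'I_N -> bool :=
  match t with
  | 0 => vvec i 1
  | 1 => vvec i 1
  | t'.+1 => fun k => vvec i t k && Ltot_mul (alpha i t') k
  end.

(* beta_aux k = beta(T - k) *)
Fixpoint beta_aux (i : nat -> 'I_P) (T k : nat) : 'I_N -> bool :=
  match k with
  | 0 => alpha i T
  | k'.+1 => fun j => alpha i (T - k'.+1) j && LtotT_mul (beta_aux i T k') j
  end.

Definition beta (i : nat -> 'I_P) (T t : nat) : 'I_N -> bool :=
  beta_aux i T (T - t).

Definition hadL_nonzero (a : 'I_M) (j : 'I_N) (w : 'I_N -> bool) : bool :=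
  [exists k, (L a j == k) && w k].

Definition Txu (i : nat -> 'I_P) (T t : nat) (j : 'I_N) (a : 'I_M) : bool :=
  if t == 0 then hadL_nonzero a j (beta i T 1)
  else beta i T t j && hadL_nonzero a j (beta i T t.+1).

Definition Tu (i : nat -> 'I_P) (T t : nat) (x : 'I_N) : pred 'I_M :=
  fun a => Txu i T t x a.

Definition procedure_run (i : nat -> 'I_P) (T : nat) (x0 : 'I_N)
    (xs : nat -> 'I_N) (u : nat -> 'I_M) (t : nat) : Prop :=
  xs 0 = x0 /\
  forall s, s < t -> u s \in Tu i T s (xs s) /\ xs s.+1 = L (u s) (xs s).

End BCN.

(* Every state of beta(t) lies in v(t), so it has output y_r(t), and, for
   t < T, it has by construction a successor in beta(t+1); the states of a
   tracking trajectory lie in beta, so trackability from x0 gives x0 a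
   successor in beta(1). The procedure keeps x_t in beta(t) for t in [1,T]:
   this makes each T_u(t, x_t) nonempty and forces H x_t = y_r(t). *)
From Pilot Require Import Defs.
From mathcomp Require Import all_boot.
From mathcomp Require Import zify.

Set Implicit Arguments. Unset Strict Implicit. Unset Printing Implicit Defensive.

Section Tracking.
Variables (N M P : nat) (L : 'I_M -> 'I_N -> 'I_N) (H : 'I_N -> 'I_P).
Variables (T : nat) (i : nat -> 'I_P).

Local Notation alpha := (alpha L H i).
Local Notation beta := (beta L H i T).

Lemma hadL_nonzeroE a j w : hadL_nonzero L a j w = w (L a j).
Proof.
apply/existsP/idP => [[k /andP[/eqP-> //]] | wLaj].
by exists (L a j); rewrite eqxx.
Qed.

Lemma LtotT_mulE w j : LtotT_mul L w j = [exists a, w (L a j)].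
Proof.
apply/existsP/existsP => [[k /andP[/existsP[a /eqP Lajk] wk]] | [a wLaj]].
  by exists a; rewrite Lajk.
by exists (L a j); rewrite wLaj andbT; apply/existsP; exists a.
Qed.

Lemma alphaS t :
  1 <= t -> alpha t.+1 =1 fun k => vvec H i t.+1 k && Ltot_mul L (alpha t) k.
Proof. by case: t. Qed.

Lemma alpha_output t j : 1 <= t -> alpha t j -> H j = i t.
Proof. by case: t => [//|[|t]] _ /=; [move/eqP | case/andP=> /eqP]. Qed.

Lemma beta_last : beta T =1 alpha T.
Proof. by rewrite /Defs.beta subnn. Qed.

Lemma betaE t :
  t < T -> beta t =1 fun j => alpha t j && [exists a, beta t.+1 (L a j)].
Proof.
move=> ltT j; rewrite -LtotT_mulE /Defs.beta.
have -> : T - t = (T - t.+1).+1 by lia.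
by rewrite /= (_ : T - (T - t.+1).+1 = t) //; lia.
Qed.

Lemma beta_sub_alpha t j : t <= T -> beta t j -> alpha t j.
Proof.
rewrite leq_eqVlt => /orP[/eqP-> | ltT]; first by rewrite beta_last.
by rewrite betaE // => /andP[].
Qed.

Lemma beta_succ t j : t < T -> beta t j -> exists a, beta t.+1 (L a j).
Proof. by move=> ltT; rewrite betaE // => /andP[_ /existsP]. Qed.

Section TrackingTrajectory.
Variables (u : nat -> 'I_M) (x0 : 'I_N).
Hypothesis tracks : forall t, 1 <= t <= T -> H (traj L u x0 t) = i t.

Lemma tracking_traj_alpha t : 1 <= t <= T -> alpha t (traj L u x0 t).
Proof.
elim: t => [//|[|t] IH] /andP[_ tT].
  by apply/eqP; apply: tracks; rewrite tT.
rewrite alphaS //; apply/andP; split; first by apply/eqP; apply: tracks; rewrite tT.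
apply/existsP; exists (traj L u x0 t.+1); rewrite IH ?(ltnW tT) // andbT.
by apply/existsP; exists (u t.+1).
Qed.

Lemma tracking_traj_beta t : 1 <= t <= T -> beta t (traj L u x0 t).
Proof.
move=> /andP[t1 tT]; rewrite -(subKn tT).
have : T - t < T by lia.
elim: (T - t) => [T0 | k IH ltT].
  by rewrite subn0 beta_last tracking_traj_alpha // T0 leqnn.
have Tk : T - k = (T - k.+1).+1 by lia.
rewrite betaE; last by lia.
rewrite tracking_traj_alpha; last by lia.
by apply/existsP; exists (u (T - k.+1)); move: (IH (ltnW ltT)); rewrite Tk.
Qed.

End TrackingTrajectory.

Lemma in_TuE t x a :
  (a \in Tu L H i T t x) = if t == 0 then beta 1 (L a x) else beta t x && beta t.+1 (L a x).
Proof. by rewrite unfold_in /Tu /Txu !hadL_nonzeroE. Qed.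

Lemma Tu_succ_beta t x a : a \in Tu L H i T t x -> beta t.+1 (L a x).
Proof. by rewrite in_TuE; case: eqP => [-> | _ /andP[]]. Qed.

Lemma Tu0_nonempty x0 :
  1 <= T -> trackable_from L H T i x0 -> exists a, a \in Tu L H i T 0 x0.
Proof.
move=> T1 [u tracks]; exists (u 0); rewrite in_TuE /=.
by apply: (tracking_traj_beta tracks (t := 1)); rewrite T1.
Qed.

Lemma TuS_nonempty t x :
  t.+1 < T -> beta t.+1 x -> exists a, a \in Tu L H i T t.+1 x.
Proof.
move=> ltT bx; have [a ba] := beta_succ ltT bx.
by exists a; rewrite in_TuE /= bx.
Qed.

Lemma procedure_run_beta x0 xs u t :
  procedure_run L H i T x0 xs u t -> forall s, s < t -> beta s.+1 (xs s.+1).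
Proof. by move=> [_ run] s /run[Tus ->]; apply: Tu_succ_beta Tus. Qed.

End Tracking.

Theorem corollary1 (N M P : nat) (L : 'I_M -> 'I_N -> 'I_N) (H : 'I_N -> 'I_P)
    (T : nat) (i : nat -> 'I_P) :
  1 <= T ->
  (forall x0 : 'I_N, trackable_from L H T i x0) ->
  forall x0 : 'I_N,
    (* the procedure can always be continued: T_u(t, x_t) is nonempty *)
    (forall (t : nat) (xs : nat -> 'I_N) (u : nat -> 'I_M),
        t < T -> procedure_run L H i T x0 xs u t ->
        exists a : 'I_M, a \in Tu L H i T t (xs t)) /\
    (* every input sequence produced by the procedure ensures tracking *)
    (forall (xs : nat -> 'I_N) (u : nat -> 'I_M),
        procedure_run L H i T x0 xs u T ->
        forall t, 1 <= t <= T -> H (xs t) = i t).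
Proof.
move=> T1 trackable x0; split.
  move=> [|t] xs u ltT run.
    by rewrite (proj1 run); apply: Tu0_nonempty.
  exact/(TuS_nonempty ltT)/(procedure_run_beta run).
move=> xs u run [|t] // /andP[_ tT].
apply: (alpha_output (L := L)) => //.
exact/(beta_sub_alpha tT)/(procedure_run_beta run).
Qed.
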